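(* Let $A$ be an invertible upper-triangular real $d\times d$ matrix and $\Sigma$ a real diagonal $d\times d$ matrix. Then $${\rm Low}(A\otimes A^{-T})(1\otimes\Sigma-\Sigma\otimes1)(A^{-1}\otimes A^T){\rm Low}={\rm Low}(A\otimes A^{-T}){\rm Low}(1\otimes\Sigma-\Sigma\otimes1){\rm Low}(A^{-1}\otimes A^T){\rm Low}.$$
   Context: $\otimes$ is the Kronecker product, $1$ the identity, $A^{-T}=(A^{-1})^T$. ${\rm Low}\in\{0,1\}^{d^2\times d^2}$ is the diagonal matrix such that ${\rm Low}\,{\rm vec}(B)={\rm vec}({\rm low}(B))$ for all $B$, where ${\rm vec}$ is column-wise vectorization and ${\rm low}(B)$ is the strictly lower-triangular part of $B$. *)

(* Kronecker product: tensmx (notation A *t B) from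
   mathcomp-real-closed's mxtens.v, with (A *t B) (i*p+j) (k*q+l) = A i k * B j l. *)
From mathcomp Require Import all_boot all_order all_algebra.
From mathcomp Require Export mxtens.
Set Implicit Arguments. Unset Strict Implicit. Unset Printing Implicit Defensive.
Import GRing.Theory Num.Theory.
Local Open Scope ring_scope.

(* column-wise vectorization: entry (i,j) of B sits at index j*d + i,
   i.e. at mxtens_index (j, i). *)
Definition vecc {R : pzRingType} {d : nat} (B : 'M[R]_d) : 'cV[R]_(d * d) :=
  \col_k B (mxtens_unindex k).2 (mxtens_unindex k).1.

Definition low {R : pzRingType} {d : nat} (B : 'M[R]_d) : 'M[R]_d :=
  \matrix_(i, j) (if (j < i)%N then B i j else 0).

(* Low : diagonal 0/1 matrix selecting the strictly-lower entries in vecc *)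
Definition Low {R : pzRingType} (d : nat) : 'M[R]_(d * d) :=
  \matrix_(k, l) (if (k == l) && ((mxtens_unindex k).1 < (mxtens_unindex k).2)%N
                  then 1 else 0).

Lemma Low_vecc {R : pzRingType} {d : nat} (B : 'M[R]_d) :
  Low d *m vecc B = vecc (low B).
Proof.
apply/matrixP=> k l; rewrite !mxE (bigD1 k) //= big1 ?addr0.
  by rewrite !mxE eqxx /=; case: ifP; rewrite ?mul1r ?mul0r.
by move=> i /negbTE ik; rewrite !mxE eq_sym ik /= mul0r.
Qed.

From mathcomp Require Import all_boot all_order all_algebra.
From mathcomp Require Import mxtens.
Set Implicit Arguments.
Unset Strict Implicit.
Unset Printing Implicit Defensive.
Import GRing.Theory Num.Theory.
Local Open Scope ring_scope.

(* Low and D := 1 ⊗ Σ - Σ ⊗ 1 are diagonal, hence commute, so the identity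
   reduces to D (1 - Low) N Low = 0 for N := A^-1 ⊗ A^T. The entry of D at the
   index (p, q) is σ_q - σ_p, which vanishes when p = q. The entry of N from a
   non-lower index (p, q), q < p, to a lower index (k, l), k < l, is
   (A^-1)_{pk} A_{lq}: either q < l and A_{lq} = 0, or k < l <= q < p and
   (A^-1)_{pk} = 0, because A^-1 is upper triangular too. *)

Lemma invmx_upper_trig (R : fieldType) n (A : 'M[R]_n) :
  A \in unitmx -> (forall i j : 'I_n, (j < i)%N -> A i j = 0) ->
  forall i j : 'I_n, (j < i)%N -> invmx A i j = 0.
Proof.
move=> Aunit Aup.
have Akk_neq0 k : A k k != 0.
  have AT_trig : is_trig_mx A^T by apply/is_trig_mxP => i j ij; rewrite mxE Aup.
  move: Aunit; rewrite unitmxE -det_tr det_trig // unitfE.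
  by rewrite (bigD1 k) //= mulf_eq0 negb_or mxE => /andP[].
(* Column by column: (A^-1 A)_{pk} = 0 reduces to (A^-1)_{pk} A_{kk} = 0. *)
suff col_eq0 m (k p : 'I_n) : (k < m)%N -> (k < p)%N -> invmx A p k = 0.
  by move=> p k; apply: col_eq0 (ltnSn k).
elim: m k p => [//|m IHm] k p km kp.
have := congr1 (fun M : 'M[R]_n => M p k) (mulVmx Aunit).
rewrite !mxE (bigD1 k) //= big1 ?addr0 => [|j jk].
  rewrite -val_eqE gtn_eqF // => /eqP.
  by rewrite mulf_eq0 (negbTE (Akk_neq0 k)) orbF => /eqP.
case: (ltngtP k j) => [kj|jk'|/val_inj kj]; last by rewrite kj eqxx in jk.
  by rewrite Aup ?mulr0.
by rewrite IHm ?mul0r ?(ltn_trans jk' kp) ?(leq_trans jk' km).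
Qed.

Lemma mxtens_index_eq m n (i k : 'I_m) (j l : 'I_n) :
  (mxtens_index (i, j) == mxtens_index (k, l)) = (i == k) && (j == l).
Proof. by rewrite (inj_eq (can_inj (@mxtens_indexK m n))) xpair_eqE. Qed.

Lemma tens_diag_mx (R : pzRingType) m n (a : 'rV[R]_m) (b : 'rV[R]_n) :
  diag_mx a *t diag_mx b
  = diag_mx (\row_k (a 0 (mxtens_unindex k).1 * b 0 (mxtens_unindex k).2)).
Proof.
apply/matrixP => x y.
case: (mxtens_indexP x) => i j; case: (mxtens_indexP y) => k l.
rewrite tensmxE !mxE mxtens_indexK mxtens_index_eq.
by case: eqP => [->|_]; case: eqP => [->|_]; rewrite ?mulr0n ?mulr0 ?mul0r.
Qed.

Lemma compress_mulmx (R : pzRingType) n (P D M N : 'M[R]_n) :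
  P *m P = P -> P *m D = D *m P -> D *m N *m P = D *m P *m N *m P ->
  P *m M *m D *m N *m P = P *m M *m P *m D *m P *m N *m P.
Proof.
move=> PP PD DNP.
have PDP : P *m D *m P = D *m P by rewrite PD -mulmxA PP.
have -> : P *m M *m P *m D *m P = P *m M *m (P *m D *m P) by rewrite !mulmxA.
rewrite PDP.
have -> : P *m M *m (D *m P) *m N *m P = P *m M *m (D *m P *m N *m P).
  by rewrite !mulmxA.
by rewrite -DNP !mulmxA.
Qed.

Definition lower_index {d} (k : 'I_(d * d)) : bool :=
  ((mxtens_unindex k).1 < (mxtens_unindex k).2)%N.

Lemma Low_diag (R : pzRingType) d :
  Low d = diag_mx (\row_k (lower_index k)%:R) :> 'M[R]_(d * d).
Proof.
apply/matrixP => x y; rewrite !mxE /lower_index.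
by case: eqP => [->|_]; case: ltnP; rewrite ?mulr0n.
Qed.

Lemma Low_idem (R : pzRingType) d : Low d *m Low d = Low d :> 'M[R]_(d * d).
Proof.
rewrite Low_diag mulmx_diag; congr diag_mx; apply/rowP => k.
by rewrite !mxE; case: lower_index; rewrite ?mulr1 ?mul0r.
Qed.

Lemma tens1_sub_tens_diag (R : comPzRingType) d (s : 'rV[R]_d) :
  1%:M *t diag_mx s - diag_mx s *t 1%:M
  = diag_mx (\row_k (s 0 (mxtens_unindex k).2 - s 0 (mxtens_unindex k).1)).
Proof.
rewrite -diag_const_mx !tens_diag_mx -raddfB; congr diag_mx.
by apply/rowP => k; rewrite !mxE mul1r mulr1.
Qed.

Lemma tens_invmx_upper_eq0 (R : fieldType) d (A : 'M[R]_d) :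
  A \in unitmx -> (forall i j : 'I_d, (j < i)%N -> A i j = 0) ->
  forall p q k l : 'I_d, (q < p)%N -> (k < l)%N ->
  (invmx A *t A^T) (mxtens_index (p, q)) (mxtens_index (k, l)) = 0.
Proof.
move=> Aunit Aup p q k l qp kl; rewrite tensmxE mxE.
have [ql|lq] := ltnP q l; first by rewrite Aup ?mulr0.
by rewrite invmx_upper_trig ?mul0r // (leq_trans kl (leq_trans lq (ltnW qp))).
Qed.

Lemma diag_tens_invmx_upper_compress (R : fieldType) d (A : 'M[R]_d)
    (e : 'rV[R]_(d * d)) :
  A \in unitmx -> (forall i j : 'I_d, (j < i)%N -> A i j = 0) ->
  (forall p : 'I_d, e 0 (mxtens_index (p, p)) = 0) ->
  diag_mx e *m (invmx A *t A^T) *m Low d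
  = diag_mx e *m Low d *m (invmx A *t A^T) *m Low d.
Proof.
move=> Aunit Aup e_diag0.
move: (invmx A *t A^T) (tens_invmx_upper_eq0 Aunit Aup) => N N_eq0.
rewrite -!mulmxA Low_diag mul_mx_diag !mul_diag_mx; apply/matrixP => x y.
case: (mxtens_indexP x) => p q; case: (mxtens_indexP y) => k l.
rewrite !mxE /lower_index !mxtens_indexK /=.
have [kl|_] := ltnP k l; last by rewrite !mulr0.
have [_|qp] := ltnP p q; first by rewrite mul1r.
rewrite mul0r mulr0; case: (ltngtP q p) qp => // [qp _|/val_inj <- _].
  by rewrite N_eq0 ?mul0r ?mulr0.
by rewrite e_diag0 mul0r.
Qed.

Theorem lemma7 (R : realFieldType) (d : nat) (A Sig : 'M[R]_d)
  (hAinv : A \in unitmx)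
  (hAup : forall i j : 'I_d, (j < i)%N -> A i j = 0)
  (hSdiag : is_diag_mx Sig) :
  Low d *m (A *t (invmx A)^T) *m ((1%:M : 'M[R]_d) *t Sig - Sig *t (1%:M : 'M[R]_d))
    *m (invmx A *t A^T) *m Low d
  = Low d *m (A *t (invmx A)^T) *m Low d
    *m ((1%:M : 'M[R]_d) *t Sig - Sig *t (1%:M : 'M[R]_d)) *m Low d
    *m (invmx A *t A^T) *m Low d.
Proof.
have [s ->] := diag_mxP _ hSdiag.
rewrite tens1_sub_tens_diag; apply: compress_mulmx.
- exact: Low_idem.
- by rewrite Low_diag diag_mxC.
- apply: diag_tens_invmx_upper_compress => // p.
  by rewrite mxE mxtens_indexK subrr.
Qed.
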